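(* Let $A\subseteq\mathbb{R}^n$ and $B\subseteq\mathbb{R}^m$. Let $f:A\times B\to\mathbb{R}$ be continuous, with $f(a,\cdot)$ $\mu$-strongly concave for every $a\in A$ and $f$ $L$-Lipschitz on $A\times B$, and let $g:A\rightrightarrows B$ be an $L'$-Hausdorff Lipschitz continuous correspondence with non-empty, convex, compact values. Define $f^*(a)=\max_{b\in g(a)}f(a,b)$ and $g^*(a)=\arg\max_{b\in g(a)}f(a,b)$. Then $f^*$ is continuous and $g^*$ is an upper semi-continuous, non-empty, single-valued correspondence, i.e. a continuous function. Moreover $f^*$ is $(L+L L')$-Lipschitz continuous, and $g^*$ is $\big(L'+2\sqrt{4/\mu}\sqrt{L+LL'}\big)$-$(1/2)$-Hölder continuous for sufficiently small differences, i.e. $\|g^*(a_1)-g^*(a_2)\|\le\big(L'+2\sqrt{4/\mu}\sqrt{L+LL'}\big)\|a_1-a_2\|^{1/2}$ whenever $\|a_1-a_2\|$ is sufficiently small.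
   Context: $g$ is $L'$-Hausdorff Lipschitz if $d_H(g(a_1),g(a_2))\le L'\|a_1-a_2\|$, where $d_H$ is the Hausdorff distance. A correspondence $g^*$ is upper semi-continuous at $a_0$ if for every open $V\supseteq g^*(a_0)$ there is a neighborhood $U$ of $a_0$ with $g^*(a)\subseteq V$ for all $a\in U$. $f(a,\cdot)$ is $\mu$-strongly concave if $-f(a,\cdot)-\frac{\mu}{2}\|\cdot\|^2$ is convex... equivalently $f(a,\tfrac{x+y}{2})\ge\tfrac{f(a,x)+f(a,y)}{2}+\tfrac{\mu}{8}\|x-y\|^2$. *)

From HB Require Import structures.
From mathcomp Require Import all_boot all_order all_algebra.
From mathcomp Require Import all_classical all_reals all_analysis.
Set Implicit Arguments. Unset Strict Implicit. Unset Printing Implicit Defensive.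
Import Order.TTheory GRing.Theory Num.Theory.
Import numFieldNormedType.Exports.
Local Open Scope classical_set_scope.
Local Open Scope ring_scope.

Section Defs.
Variable R : realType.

Definition enorm (n : nat) (v : 'rV[R]_n) : R :=
  Num.sqrt (\sum_(i < n) (v ord0 i) ^+ 2).

Definition pnorm (n m : nat) (a : 'rV[R]_n) (b : 'rV[R]_m) : R :=
  Num.sqrt (enorm a ^+ 2 + enorm b ^+ 2).

(* h is mu-strongly concave on B: -h - mu/2 ||.||^2 is convex on B, i.e. *)
Definition strongly_concave_on (m : nat) (B : set 'rV[R]_m)
    (h : 'rV[R]_m -> R) (mu : R) : Prop :=
  forall x y (t : R), B x -> B y -> 0 <= t <= 1 -> B (t *: x + (1 - t) *: y) ->
    t * h x + (1 - t) * h y + mu / 2 * t * (1 - t) * (enorm (x - y)) ^+ 2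
      <= h (t *: x + (1 - t) *: y).

Definition point_set_dist (m : nat) (x : 'rV[R]_m) (Y : set 'rV[R]_m) : R :=
  inf [set enorm (x - y) | y in Y].

Definition hausdorff_dist (m : nat) (X Y : set 'rV[R]_m) : R :=
  Num.max (sup [set point_set_dist x Y | x in X])
          (sup [set point_set_dist y X | y in Y]).

Definition hausdorff_lipschitz (n m : nat) (A : set 'rV[R]_n)
    (g : 'rV[R]_n -> set 'rV[R]_m) (L' : R) : Prop :=
  forall a1 a2, A a1 -> A a2 ->
    hausdorff_dist (g a1) (g a2) <= L' * enorm (a1 - a2).

Definition fstar (n m : nat) (f : 'rV[R]_n -> 'rV[R]_m -> R)
    (g : 'rV[R]_n -> set 'rV[R]_m) (a : 'rV[R]_n) : R :=
  sup [set f a b | b in g a].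

Definition gstar (n m : nat) (f : 'rV[R]_n -> 'rV[R]_m -> R)
    (g : 'rV[R]_n -> set 'rV[R]_m) (a : 'rV[R]_n) : set 'rV[R]_m :=
  [set b | g a b /\ forall b', g a b' -> f a b' <= f a b].

Definition usc_at (n m : nat) (A : set 'rV[R]_n) (G : 'rV[R]_n -> set 'rV[R]_m)
    (a0 : 'rV[R]_n) : Prop :=
  forall V : set 'rV[R]_m, open V -> G a0 `<=` V ->
    exists2 d : R, 0 < d & forall a, A a -> enorm (a - a0) < d -> G a `<=` V.

Definition rcont_within (n : nat) (A : set 'rV[R]_n) (h : 'rV[R]_n -> R)
    (a0 : 'rV[R]_n) : Prop :=
  forall e : R, 0 < e -> exists2 d : R, 0 < d &
    forall a, A a -> enorm (a - a0) < d -> `|h a - h a0| < e.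

Definition vcont_within (n m : nat) (A : set 'rV[R]_n)
    (h : 'rV[R]_n -> 'rV[R]_m) (a0 : 'rV[R]_n) : Prop :=
  forall e : R, 0 < e -> exists2 d : R, 0 < d &
    forall a, A a -> enorm (a - a0) < d -> enorm (h a - h a0) < e.

Definition cont2_within (n m : nat) (A : set 'rV[R]_n) (B : set 'rV[R]_m)
    (f : 'rV[R]_n -> 'rV[R]_m -> R) (a0 : 'rV[R]_n) (b0 : 'rV[R]_m) : Prop :=
  forall e : R, 0 < e -> exists2 d : R, 0 < d &
    forall a b, A a -> B b -> pnorm (a - a0) (b - b0) < d ->
      `|f a b - f a0 b0| < e.

End Defs.

From HB Require Import structures.
From mathcomp Require Import all_boot all_order all_algebra.
From mathcomp Require Import all_classical all_reals all_analysis.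
From mathcomp Require Import ring lra.
Import Order.TTheory GRing.Theory Num.Theory.
Import numFieldNormedType.Exports.
Local Open Scope classical_set_scope.
Local Open Scope ring_scope.

Set Implicit Arguments. Unset Strict Implicit.

(** Strong concavity gives every maximiser [b] of [f a] over [g a] a quadratic
    margin: [mu |b - b'|^2 <= 4 (f a b - f a b')] for all [b'] in [g a].
    Hausdorff-Lipschitz continuity of [g] moves a maximiser [b2] of [f a2] to a point [b'] of
    [g a1] at distance [<= L' |a1 - a2|], where [f a1] is within
    [(L + L L') |a1 - a2|] of [f a2 b2]; comparing both ways gives the
    Lipschitz bound on [f*] and a value gap [f a1 b1 - f a1 b' <= 2 (L + L L') |a1 - a2|]
    for a maximiser [b1] of [f a1], which the margin turns into the square-root
    bound on maximisers.  For [a1 = a2] this says the maximiser is unique, and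
    the Hölder bound makes it continuous, hence [g*] upper semicontinuous. *)

Section EuclideanNorm.
Variable R : realType.

Lemma cauchy_schwarz_sum m (x y : 'I_m -> R) :
  (\sum_i x i * y i) ^+ 2 <= (\sum_i x i ^+ 2) * (\sum_i y i ^+ 2).
Proof.
have lagrange : \sum_i \sum_j (x i * y j - x j * y i) ^+ 2 =
   (\sum_i x i ^+ 2) * (\sum_i y i ^+ 2) + (\sum_i y i ^+ 2) * (\sum_i x i ^+ 2)
   - 2 * ((\sum_i x i * y i) * (\sum_i x i * y i)).
  rewrite !mulr_suml mulr_sumr -big_split -sumrB /=.
  apply: eq_bigr => i _; rewrite !mulr_sumr -big_split -sumrB /=.
  by apply: eq_bigr => j _; ring.
have : 0 <= \sum_i \sum_j (x i * y j - x j * y i) ^+ 2.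
  by apply: sumr_ge0 => i _; apply: sumr_ge0 => j _; exact: sqr_ge0.
by rewrite lagrange mulrC expr2; lra.
Qed.

Lemma enorm_ge0 m (v : 'rV[R]_m) : 0 <= enorm v.
Proof. exact: sqrtr_ge0. Qed.

Lemma enorm_sqr m (v : 'rV[R]_m) : enorm v ^+ 2 = \sum_i v ord0 i ^+ 2.
Proof. by rewrite sqr_sqrtr // sumr_ge0 // => i _; exact: sqr_ge0. Qed.

Lemma enormN m (v : 'rV[R]_m) : enorm (- v) = enorm v.
Proof. by congr Num.sqrt; apply: eq_bigr => i _; rewrite mxE sqrrN. Qed.

Lemma enorm_distC m (u v : 'rV[R]_m) : enorm (u - v) = enorm (v - u).
Proof. by rewrite -enormN opprB. Qed.

Lemma enorm0 m : enorm (0 : 'rV[R]_m) = 0.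
Proof. by rewrite /enorm big1 ?sqrtr0 // => i _; rewrite mxE expr0n. Qed.

Lemma enorm0_eq0 m (v : 'rV[R]_m) : enorm v = 0 -> v = 0.
Proof.
move=> v0; have /eqP : \sum_i v ord0 i ^+ 2 = 0 by rewrite -enorm_sqr v0 expr0n.
rewrite psumr_eq0 => [/allP vi0|i _]; last exact: sqr_ge0.
apply/rowP => i; rewrite mxE; apply/eqP; rewrite -sqrf_eq0.
exact: (implyP (vi0 i (mem_index_enum _))).
Qed.

Lemma enormD m (u v : 'rV[R]_m) : enorm (u + v) <= enorm u + enorm v.
Proof.
rewrite -ler_sqr ?nnegrE ?addr_ge0 ?enorm_ge0 // sqrrD !enorm_sqr.
have -> : \sum_i (u + v) ord0 i ^+ 2 = \sum_i u ord0 i ^+ 2 + \sum_i v ord0 i ^+ 2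
   + 2 * \sum_i u ord0 i * v ord0 i.
  by rewrite mulr_sumr -!big_split; apply: eq_bigr => i _; rewrite mxE /=; ring.
have : \sum_i u ord0 i * v ord0 i <= enorm u * enorm v.
  apply: le_trans (ler_norm _) _.
  rewrite -ler_sqr ?nnegrE ?mulr_ge0 ?enorm_ge0 // real_normK ?num_real //.
  by rewrite exprMn !enorm_sqr cauchy_schwarz_sum.
by rewrite -mulr_natr; lra.
Qed.

Lemma enorm_distD m (a b c : 'rV[R]_m) :
  enorm (a - c) <= enorm (a - b) + enorm (b - c).
Proof. by rewrite (_ : a - c = (a - b) + (b - c)) ?enormD // addrA subrK. Qed.

Lemma enorm_coord_le m (v : 'rV[R]_m) i : `|v ord0 i| <= enorm v.
Proof.
rewrite -ler_sqr ?nnegrE ?enorm_ge0 // real_normK ?num_real // enorm_sqr.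
by rewrite (bigD1 i) //= lerDl sumr_ge0 // => j _; exact: sqr_ge0.
Qed.

Lemma mx_norm_le_enorm m (v : 'rV[R]_m) : `|v| <= enorm v.
Proof.
rewrite -[`|v|]/(mx_norm v) mx_normrE; apply/bigmax_leP; split.
  exact: enorm_ge0.
by move=> [i j] _ /=; rewrite ord1; exact: enorm_coord_le.
Qed.

Lemma enorm_le_mx_norm m (v : 'rV[R]_m) : enorm v <= m.+1%:R * `|v|.
Proof.
rewrite -ler_sqr ?nnegrE ?enorm_ge0 ?mulr_ge0 // enorm_sqr exprMn.
have coord_le i : v ord0 i ^+ 2 <= `|v| ^+ 2.
  rewrite -real_normK ?num_real // lerXn2r ?nnegrE //.
  by rewrite -[`|v|]/(mx_norm v) mx_normrE; exact: (le_bigmax _ _ (ord0, i)).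
apply: le_trans (ler_sum _ (fun i _ => coord_le i)) _.
rewrite sumr_const card_ord -[_ *+ m]mulr_natl ler_wpM2r ?sqr_ge0 //.
by rewrite -natrX ler_nat (leq_trans (leqnSn m)) // -{1}(expn1 m.+1) leq_pexp2l.
Qed.

Lemma pnorm_le_add n m (u : 'rV[R]_n) (v : 'rV[R]_m) :
  pnorm u v <= enorm u + enorm v.
Proof.
rewrite -ler_sqr ?nnegrE ?sqrtr_ge0 ?addr_ge0 ?enorm_ge0 //.
rewrite sqr_sqrtr ?addr_ge0 ?sqr_ge0 // sqrrD.
by have := mulr_ge0 (enorm_ge0 u) (enorm_ge0 v); rewrite -mulr_natr; lra.
Qed.

Lemma pnorm0l n m (v : 'rV[R]_m) : pnorm (0 : 'rV[R]_n) v = enorm v.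
Proof. by rewrite /pnorm enorm0 expr0n add0r sqrtr_sqr ger0_norm ?enorm_ge0. Qed.

End EuclideanNorm.

Section CompactSets.
Variables (R : realType) (m : nat).
Implicit Types (X Y K : set 'rV[R]_m) (h : 'rV[R]_m -> R).

Lemma enorm_within_continuous K h :
  (forall x, K x -> forall e, 0 < e -> exists2 d, 0 < d &
    forall y, K y -> enorm (y - x) < d -> `|h y - h x| < e) ->
  {within K, continuous h}.
Proof.
move=> h_cont; apply/subspace_continuousP => x Kx; apply/cvgrPdist_lt => e e0.
have [d d0 hd] := h_cont x Kx e e0.
have m0 : (0 : R) < m.+1%:R by rewrite ltr0Sn.
apply/nbhs_ballP; exists (d / m.+1%:R); first by rewrite /= divr_gt0.
move=> y; rewrite -ball_normE /= => xy Ky; rewrite distrC; apply: hd => //.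
by apply: le_lt_trans (enorm_le_mx_norm _) _; rewrite distrC mulrC -ltr_pdivlMr.
Qed.

Lemma compact_argmax Y h : Y !=set0 -> compact Y ->
  (forall x, Y x -> forall e, 0 < e -> exists2 d, 0 < d &
    forall y, Y y -> enorm (y - x) < d -> `|h y - h x| < e) ->
  exists2 b, Y b & forall y, Y y -> h y <= h b.
Proof.
move=> Y0 cY h_cont.
have [b Yb b_max] := EVT_max_rV Y0 cY (enorm_within_continuous h_cont).
by exists b => [|y Yy]; [rewrite inE in Yb | apply: b_max; rewrite inE].
Qed.

Lemma compact_nearest_point Y x : Y !=set0 -> compact Y ->
  exists2 b, Y b & forall y, Y y -> enorm (x - b) <= enorm (x - y).
Proof.
move=> Y0 cY.
have [b Yb b_max] : exists2 b, Y b & forall y, Y y -> - enorm (x - y) <= - enorm (x - b).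
  apply: compact_argmax => // z _ e e0; exists e => // y _ yz.
  have := enorm_distD x y z; have := enorm_distD x z y.
  by rewrite [enorm (z - y)]enorm_distC ltr_norml; lra.
by exists b => // y /b_max; rewrite lerN2.
Qed.

Lemma compact_enorm_bounded Y : compact Y -> exists M, forall y, Y y -> enorm y <= M.
Proof.
move=> /compact_bounded [M [_ M_bound]]; exists (m.+1%:R * (M + 1)) => y Yy.
apply: le_trans (enorm_le_mx_norm _) _; rewrite ler_wpM2l //.
by apply: (M_bound (M + 1)) => //; rewrite ltrDl.
Qed.

Lemma point_set_dist_le_hausdorff X Y y : X !=set0 -> compact Y -> Y y ->
  point_set_dist y X <= hausdorff_dist X Y.
Proof.
move=> [x0 Xx0] cY Yy; rewrite le_max; apply/orP; right.
apply: ub_le_sup; last by exists y.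
have [M M_bound] := compact_enorm_bounded cY.
exists (M + enorm (- x0)) => _ [z Yz <-].
have : point_set_dist z X <= enorm (z - x0).
  apply: ge_inf; last by exists x0.
  by exists 0 => _ [x _ <-]; exact: enorm_ge0.
by move/le_trans; apply; apply: le_trans (enormD _ _) _; rewrite lerD2r M_bound.
Qed.

Lemma hausdorff_nearest_point X Y y : X !=set0 -> compact X -> compact Y -> Y y ->
  exists2 x, X x & enorm (x - y) <= hausdorff_dist X Y.
Proof.
move=> X0 cX cY Yy; have [x Xx x_min] := compact_nearest_point y X0 cX.
exists x => //; rewrite enorm_distC.
apply: le_trans (point_set_dist_le_hausdorff X0 cY Yy).
apply: lb_le_inf; first by exists (enorm (y - x)), x.
by move=> _ [z Xz <-]; exact: x_min.
Qed.

End CompactSets.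

Lemma strongly_concave_argmax_growth (R : realType) m (B Y : set 'rV[R]_m)
    (h : 'rV[R]_m -> R) (mu : R) b b' :
  Y `<=` B -> convex_set Y -> strongly_concave_on B h mu ->
  Y b -> (forall y, Y y -> h y <= h b) -> Y b' ->
  mu * enorm (b - b') ^+ 2 <= 4 * (h b - h b').
Proof.
move=> YB cY h_sc Yb b_max Yb'.
have half01 : (0 : R) <= 2^-1 <= (1 : R) by rewrite invr_ge0 ler0n invf_le1 ?ler1n.
have Ymid : Y (2^-1 *: b + (1 - 2^-1) *: b').
  by move: (cY b b' (Itv01 (proj1 (andP half01)) (proj2 (andP half01)))); rewrite !inE; apply.
have := h_sc b b' 2^-1 (YB _ Yb) (YB _ Yb') half01 (YB _ Ymid).
have := b_max _ Ymid; set E := enorm (b - b') ^+ 2.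
have -> : mu / 2 * 2^-1 * (1 - 2^-1) * E = mu * E / 8 by field.
by lra.
Qed.

Lemma fstar_gstarE (R : realType) n m (f : 'rV[R]_n -> 'rV[R]_m -> R) g a b :
  gstar f g a b -> fstar f g a = f a b.
Proof.
move=> [gb b_max]; apply/le_anti/andP; split.
  by apply: ge_sup; [exists (f a b), b | move=> _ [y gy <-]; exact: b_max].
apply: ub_le_sup; last by exists b.
by exists (f a b) => _ [y gy <-]; exact: b_max.
Qed.

Section ParametricMaximum.
Variables (R : realType) (n m : nat).
Variables (A : set 'rV[R]_n) (B : set 'rV[R]_m).
Variables (f : 'rV[R]_n -> 'rV[R]_m -> R) (g : 'rV[R]_n -> set 'rV[R]_m).
Variables (mu L L' : R).
Hypothesis mu_gt0 : 0 < mu.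
Hypothesis L_ge0 : 0 <= L.
Hypothesis L'_ge0 : 0 <= L'.
Hypothesis f_cont : forall a b, A a -> B b -> cont2_within A B f a b.
Hypothesis f_sconcave : forall a, A a -> strongly_concave_on B (f a) mu.
Hypothesis f_lip : forall a1 a2 b1 b2, A a1 -> A a2 -> B b1 -> B b2 ->
  `|f a1 b1 - f a2 b2| <= L * pnorm (a1 - a2) (b1 - b2).
Hypothesis g_sub : forall a, A a -> g a `<=` B.
Hypothesis g_props : forall a, A a -> g a !=set0 /\ convex_set (g a) /\ compact (g a).
Hypothesis g_hlip : hausdorff_lipschitz A g L'.

Local Notation K := (L + L * L').

Lemma K_ge0 : 0 <= K.
Proof. by rewrite addr_ge0 ?mulr_ge0. Qed.

Lemma gstar_exists a : A a -> exists b, gstar f g a b.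
Proof.
move=> Aa; have [g0 [_ g_cpt]] := g_props Aa.
have [b gb b_max] : exists2 b, g a b & forall y, g a y -> f a y <= f a b.
  apply: compact_argmax => // x gx e e0.
  have [d d0 hd] := f_cont Aa (g_sub Aa gx) e0.
  exists d => // y gy yx; apply: hd => //; first exact: g_sub gy.
  by rewrite subrr pnorm0l.
by exists b.
Qed.

Lemma g_near_point a1 a2 b2 : A a1 -> A a2 -> g a2 b2 ->
  exists2 b', g a1 b' & enorm (b' - b2) <= L' * enorm (a1 - a2).
Proof.
move=> Aa1 Aa2 gb2; have [g0 [_ g_cpt1]] := g_props Aa1.
have [_ [_ g_cpt2]] := g_props Aa2.
have [b' gb' b'b2] := hausdorff_nearest_point g0 g_cpt1 g_cpt2 gb2.
by exists b' => //; apply: le_trans b'b2 (g_hlip Aa1 Aa2).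
Qed.

Lemma f_near_point_dist a1 a2 b' b2 : A a1 -> A a2 -> g a1 b' -> g a2 b2 ->
  enorm (b' - b2) <= L' * enorm (a1 - a2) ->
  `|f a1 b' - f a2 b2| <= K * enorm (a1 - a2).
Proof.
move=> Aa1 Aa2 gb' gb2 b'b2.
apply: le_trans (f_lip Aa1 Aa2 (g_sub Aa1 gb') (g_sub Aa2 gb2)) _.
apply: le_trans (ler_wpM2l L_ge0 (pnorm_le_add _ _)) _.
apply: le_trans (ler_wpM2l L_ge0 (lerD (lexx _) b'b2)) _.
by rewrite mulrDr mulrDl mulrA.
Qed.

Lemma gstar_value_ge a1 a2 b1 b2 : A a1 -> A a2 ->
  gstar f g a1 b1 -> gstar f g a2 b2 ->
  f a2 b2 - K * enorm (a1 - a2) <= f a1 b1.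
Proof.
move=> Aa1 Aa2 [gb1 b1_max] [gb2 _].
have [b' gb' b'b2] := g_near_point Aa1 Aa2 gb2.
have := f_near_point_dist Aa1 Aa2 gb' gb2 b'b2.
by have := b1_max _ gb'; rewrite ler_norml; lra.
Qed.

Lemma fstar_lipschitz a1 a2 : A a1 -> A a2 ->
  `|fstar f g a1 - fstar f g a2| <= K * enorm (a1 - a2).
Proof.
move=> Aa1 Aa2; have [b1 gs1] := gstar_exists Aa1; have [b2 gs2] := gstar_exists Aa2.
rewrite (fstar_gstarE gs1) (fstar_gstarE gs2).
have := gstar_value_ge Aa1 Aa2 gs1 gs2; have := gstar_value_ge Aa2 Aa1 gs2 gs1.
by rewrite enorm_distC ler_norml; move=> *; apply/andP; split; lra.
Qed.

Lemma gstar_sqr_dist_le a1 a2 b1 b' b2 : A a1 -> A a2 ->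
  gstar f g a1 b1 -> gstar f g a2 b2 -> g a1 b' ->
  enorm (b' - b2) <= L' * enorm (a1 - a2) ->
  mu * enorm (b1 - b') ^+ 2 <= 8 * (K * enorm (a1 - a2)).
Proof.
move=> Aa1 Aa2 gs1 gs2 gb' b'b2; have [gb1 b1_max] := gs1.
have [_ [g_cvx _]] := g_props Aa1.
have growth := strongly_concave_argmax_growth (g_sub Aa1) g_cvx
  (f_sconcave Aa1) gb1 b1_max gb'.
have := f_near_point_dist Aa1 Aa2 gb' gs2.1 b'b2; rewrite ler_norml => /andP[+ _].
by have := gstar_value_ge Aa2 Aa1 gs2 gs1; rewrite enorm_distC; lra.
Qed.

Lemma gstar_holder a1 a2 b1 b2 : A a1 -> A a2 -> enorm (a1 - a2) <= 1 ->
  gstar f g a1 b1 -> gstar f g a2 b2 ->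
  enorm (b1 - b2) <=
    (L' + 2 * Num.sqrt (4 / mu) * Num.sqrt K) * Num.sqrt (enorm (a1 - a2)).
Proof.
move=> Aa1 Aa2 d_le1 gs1 gs2; have [b' gb' b'b2] := g_near_point Aa1 Aa2 gs2.1.
have sqr_le := gstar_sqr_dist_le Aa1 Aa2 gs1 gs2 gb' b'b2.
set d := enorm (a1 - a2) in d_le1 b'b2 sqr_le *.
have d_ge0 : 0 <= d by exact: enorm_ge0.
have b1b' : enorm (b1 - b') <= 2 * Num.sqrt (4 / mu) * Num.sqrt K * Num.sqrt d.
  rewrite -ler_sqr ?nnegrE ?enorm_ge0 ?mulr_ge0 ?sqrtr_ge0 //.
  have -> : (2 * Num.sqrt (4 / mu) * Num.sqrt K * Num.sqrt d) ^+ 2 = 16 * (K * d) / mu.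
    rewrite !exprMn !sqr_sqrtr ?divr_ge0 ?K_ge0 ?(ltW mu_gt0) //.
    by field; rewrite gt_eqF.
  by rewrite ler_pdivlMr //; have := mulr_ge0 K_ge0 d_ge0; lra.
have d_le_sqrt : d <= Num.sqrt d.
  rewrite -{1}(sqr_sqrtr d_ge0) expr2 ler_piMl ?sqrtr_ge0 //.
  by rewrite -sqrtr1 ler_sqrt.
have b'b2' := le_trans b'b2 (ler_wpM2l L'_ge0 d_le_sqrt).
by apply: le_trans (enorm_distD b1 b' b2) _; rewrite mulrDl; lra.
Qed.

Lemma gstar_unique a b1 b2 : A a -> gstar f g a b1 -> gstar f g a b2 -> b1 = b2.
Proof.
move=> Aa gs1 gs2; have := gstar_holder Aa Aa _ gs1 gs2.
rewrite subrr enorm0 sqrtr0 mulr0 => /(_ ler01) b1b2.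
by apply/subr0_eq/enorm0_eq0/le_anti; rewrite b1b2 enorm_ge0.
Qed.

Definition argmax a := xget 0 (gstar f g a).

Lemma gstar_argmax a : A a -> gstar f g a = [set argmax a].
Proof.
move=> Aa; have argmaxP := xgetPex 0 (gstar_exists Aa).
by apply/seteqP; split => b /=; [move=> gs; exact: gstar_unique Aa gs argmaxP | move=> ->].
Qed.

Lemma argmax_continuous a0 : A a0 -> vcont_within A argmax a0.
Proof.
move=> Aa0 e e_gt0; pose C := L' + 2 * Num.sqrt (4 / mu) * Num.sqrt K.
have C_ge0 : 0 <= C by rewrite addr_ge0 ?mulr_ge0 ?sqrtr_ge0.
have eC_gt0 : 0 < e / (C + 1) by rewrite divr_gt0 // ltr_wpDl.
exists (Num.min 1 ((e / (C + 1)) ^+ 2)); first by rewrite lt_min ltr01 exprn_gt0.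
move=> a Aa; rewrite lt_min => /andP[d_lt1 d_lte].
have := gstar_holder Aa Aa0 (ltW d_lt1).
rewrite (gstar_argmax Aa) (gstar_argmax Aa0) => /(_ _ _ erefl erefl).
move/le_lt_trans; apply; rewrite -/C.
have : Num.sqrt (enorm (a - a0)) < e / (C + 1).
  by rewrite -[e / _]ger0_norm ?ltW // -sqrtr_sqr ltr_sqrt ?exprn_gt0.
by rewrite ltr_pdivlMr ?ltr_wpDl //; have := sqrtr_ge0 (enorm (a - a0)); nra.
Qed.

Lemma gstar_usc a : A a -> usc_at A (gstar f g) a.
Proof.
move=> Aa V; rewrite openE (gstar_argmax Aa) => V_open /(_ _ erefl) /V_open.
move=> /nbhs_ballP[r r_gt0 ballV]; have [d d_gt0 hd] := argmax_continuous Aa r_gt0.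
exists d => // a' Aa' a'a; rewrite (gstar_argmax Aa') => _ ->; apply: ballV.
by rewrite -ball_normE /= distrC (le_lt_trans (mx_norm_le_enorm _) (hd _ Aa' a'a)).
Qed.

Lemma fstar_continuous a0 : A a0 -> rcont_within A (fstar f g) a0.
Proof.
move=> Aa0 e e_gt0; have K1_gt0 : 0 < K + 1 by rewrite ltr_wpDl ?K_ge0.
exists (e / (K + 1)) => [|a Aa]; first by rewrite divr_gt0.
rewrite ltr_pdivlMr // => aa0; apply: le_lt_trans (fstar_lipschitz Aa Aa0) _.
by have := enorm_ge0 (a - a0); have := K_ge0; nra.
Qed.

End ParametricMaximum.

Theorem mainTheorem16 (R : realType) (n m : nat)
  (A : set 'rV[R]_n) (B : set 'rV[R]_m)
  (f : 'rV[R]_n -> 'rV[R]_m -> R) (g : 'rV[R]_n -> set 'rV[R]_m)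
  (mu L L' : R) :
  0 < mu -> 0 <= L -> 0 <= L' ->
  (forall a b, A a -> B b -> cont2_within A B f a b) ->
  (forall a, A a -> strongly_concave_on B (f a) mu) ->
  (forall a1 a2 b1 b2, A a1 -> A a2 -> B b1 -> B b2 ->
     `|f a1 b1 - f a2 b2| <= L * pnorm (a1 - a2) (b1 - b2)) ->
  (forall a, A a -> g a `<=` B) ->
  (forall a, A a -> g a !=set0 /\ convex_set (g a) /\ compact (g a)) ->
  hausdorff_lipschitz A g L' ->
  (forall a0, A a0 -> rcont_within A (fstar f g) a0) /\
  (forall a, A a -> (exists b, gstar f g a = [set b]) /\ usc_at A (gstar f g) a) /\
  (exists h : 'rV[R]_n -> 'rV[R]_m,
     (forall a, A a -> gstar f g a = [set h a]) /\
     (forall a0, A a0 -> vcont_within A h a0)) /\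
  (forall a1 a2, A a1 -> A a2 ->
     `|fstar f g a1 - fstar f g a2| <= (L + L * L') * enorm (a1 - a2)) /\
  (exists2 delta : R, 0 < delta &
     forall a1 a2 b1 b2, A a1 -> A a2 -> enorm (a1 - a2) < delta ->
       gstar f g a1 b1 -> gstar f g a2 b2 ->
       enorm (b1 - b2) <=
         (L' + 2 * Num.sqrt (4 / mu) * Num.sqrt (L + L * L'))
           * Num.sqrt (enorm (a1 - a2))).
Proof.
move=> mu_gt0 L_ge0 L'_ge0 f_cont f_sconcave f_lip g_sub g_props g_hlip.
have gstarE := gstar_argmax mu_gt0 L_ge0 L'_ge0 f_cont f_sconcave f_lip g_sub g_props g_hlip.
split; first exact: (fstar_continuous L_ge0 L'_ge0 f_cont f_lip g_sub g_props g_hlip).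
split.
  move=> a Aa; split; first by exists (argmax f g a); exact: gstarE.
  exact: (gstar_usc mu_gt0 L_ge0 L'_ge0 f_cont f_sconcave f_lip g_sub g_props g_hlip Aa).
split.
  exists (argmax f g); split; first exact: gstarE.
  exact: (argmax_continuous mu_gt0 L_ge0 L'_ge0 f_cont f_sconcave f_lip g_sub g_props g_hlip).
split; first by move=> a1 a2; exact: (fstar_lipschitz L_ge0 f_cont f_lip g_sub g_props g_hlip).
exists 1 => // a1 a2 b1 b2 Aa1 Aa2 /ltW.
exact: (gstar_holder mu_gt0 L_ge0 L'_ge0 f_sconcave f_lip g_sub g_props g_hlip).
Qed.
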